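(* Let $\Omega\subset\mathbb{C}^d$ be a complete Kobayashi hyperbolic domain and let $\gamma:[0,\infty)\to\Omega$ be a geodesic ray. Suppose $x,y\in\partial\Omega$ and there are sequences $t_n\to\infty$, $s_n\to\infty$ with $\gamma(t_n)\to x$ and $\gamma(s_n)\to y$. Then for every $R>0$ and every $o\in\Omega$, $y\in\overline{H^b_o(x,R)}$. In particular, $x\in\overline{H^b_o(x,R)}$ for all $R>0$, $o\in\Omega$.
   Context: For a Kobayashi hyperbolic domain $\Omega\subset\mathbb{C}^d$ with Kobayashi distance $\mathsf{k}_\Omega$, $x\in\partial\Omega$, $o\in\Omega$, $R>0$: $H^b_o(x,R)=\{z\in\Omega:\liminf_{w\to x}(\mathsf{k}_\Omega(z,w)-\mathsf{k}_\Omega(o,w))<\tfrac12\log R\}$; closure in $\mathbb{C}^d$. Complete Kobayashi hyperbolic: $(\Omega,\mathsf{k}_\Omega)$ is Cauchy complete. A geodesic ray is a map $\gamma:[0,\infty)\to\Omega$ with $\mathsf{k}_\Omega(\gamma(s),\gamma(t))=|s-t|$ for all $s,t\ge0$. *)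

From mathcomp Require Import all_boot all_order all_algebra.
From mathcomp Require Import all_classical all_reals all_analysis.
Set Implicit Arguments. Unset Strict Implicit. Unset Printing Implicit Defensive.
Import Order.TTheory GRing.Theory Num.Theory.
Local Open Scope ring_scope.
Local Open Scope classical_set_scope.

Section Kobayashi.
Variable R : realType.

(* complex numbers a + i b as pairs (a, b) *)
Definition cplx := (R * R)%type.
Definition cadd (z w : cplx) : cplx := (z.1 + w.1, z.2 + w.2).
Definition csub (z w : cplx) : cplx := (z.1 - w.1, z.2 - w.2).
Definition cmul (z w : cplx) : cplx := (z.1 * w.1 - z.2 * w.2, z.1 * w.2 + z.2 * w.1).
Definition cconj (z : cplx) : cplx := (z.1, - z.2).
Definition cone : cplx := (1, 0).
Definition cabs (z : cplx) : R := Num.sqrt (z.1 ^+ 2 + z.2 ^+ 2).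

Definition Cd (d : nat) := 'I_d -> cplx.
Definition cdnorm d (z : Cd d) : R := Num.sqrt (\sum_(i < d) cabs (z i) ^+ 2).
Definition cddist d (z w : Cd d) : R := cdnorm (fun i => csub (z i) (w i)).

Definition cd_open d (A : set (Cd d)) : Prop :=
  forall z, A z -> exists2 e : R, 0 < e & forall w, cddist z w < e -> A w.
Definition cd_closure d (A : set (Cd d)) : set (Cd d) :=
  fun x => forall e : R, 0 < e -> exists w, A w /\ cddist x w < e.
Definition cd_boundary d (A : set (Cd d)) : set (Cd d) :=
  fun x => cd_closure A x /\ ~ A x.
Definition cd_connected d (A : set (Cd d)) : Prop :=
  forall U V : set (Cd d), cd_open U -> cd_open V ->
    A `<=` U `|` V -> A `&` U `&` V = set0 ->
    A `&` U = set0 \/ A `&` V = set0.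
Definition domain d (Om : set (Cd d)) : Prop :=
  cd_open Om /\ Om !=set0 /\ cd_connected Om.
Definition seq_cvg_to d (u : nat -> Cd d) (x : Cd d) : Prop :=
  forall e : R, 0 < e -> exists N, forall n, (N <= n)%N -> cddist (u n) x < e.
Definition tends_to_pinfty (t : nat -> R) : Prop :=
  forall M : R, exists N, forall n, (N <= n)%N -> M < t n.

Definition udisc : set cplx := fun z => cabs z < 1.
Definition cdiff_at (g : cplx -> cplx) (z : cplx) : Prop :=
  exists L : cplx, forall e : R, 0 < e -> exists2 dl : R, 0 < dl &
    forall h : cplx, cabs h < dl ->
      cabs (csub (csub (g (cadd z h)) (g z)) (cmul L h)) <= e * cabs h.
Definition holo_disc d (Om : set (Cd d)) (f : cplx -> Cd d) : Prop :=
  (forall z, udisc z -> Om (f z)) /\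
  (forall z, udisc z -> forall j : 'I_d, cdiff_at (fun u => f u j) z).

Definition poincare (a b : cplx) : R :=
  let t := cabs (csub a b) / cabs (csub cone (cmul (cconj a) b)) in
  2^-1 * ln ((1 + t) / (1 - t)).

Definition kob_chain_sums d (Om : set (Cd d)) (z w : Cd d) : set R :=
  [set s | exists (n : nat) (p : nat -> Cd d) (f : nat -> cplx -> Cd d)
             (a b : nat -> cplx),
      [/\ p 0%N = z, p n = w,
          forall j, (j < n)%N ->
            [/\ holo_disc Om (f j), udisc (a j), udisc (b j),
                f j (a j) = p j & f j (b j) = p j.+1]
        & s = \sum_(j < n) poincare (a j) (b j)]].
Definition kob_dist d (Om : set (Cd d)) (z w : Cd d) : R :=
  inf (kob_chain_sums Om z w).

Definition kobayashi_hyperbolic d (Om : set (Cd d)) : Prop :=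
  forall z w, Om z -> Om w -> z <> w -> 0 < kob_dist Om z w.
Definition kob_cauchy_complete d (Om : set (Cd d)) : Prop :=
  forall u : nat -> Cd d, (forall n, Om (u n)) ->
    (forall e : R, 0 < e -> exists N, forall m n, (N <= m)%N -> (N <= n)%N ->
        kob_dist Om (u m) (u n) < e) ->
    exists2 l, Om l & forall e : R, 0 < e -> exists N, forall n, (N <= n)%N ->
        kob_dist Om (u n) l < e.
Definition complete_kob_hyperbolic d (Om : set (Cd d)) : Prop :=
  domain Om /\ kobayashi_hyperbolic Om /\ kob_cauchy_complete Om.

Definition geodesic_ray d (Om : set (Cd d)) (g : R -> Cd d) : Prop :=
  (forall t, 0 <= t -> Om (g t)) /\
  (forall s t, 0 <= s -> 0 <= t -> kob_dist Om (g s) (g t) = `|s - t|).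

Definition liminf_at d (Om : set (Cd d)) (x : Cd d) (F : Cd d -> R) : \bar R :=
  ereal_sup [set ereal_inf [set (F w)%:E | w in
                 [set w | Om w /\ w <> x /\ cddist w x < dl]]
            | dl in [set dl : R | 0 < dl]].

Definition big_horoball d (Om : set (Cd d)) (o x : Cd d) (Rr : R) : set (Cd d) :=
  [set z | Om z /\
     (liminf_at Om x (fun w => (kob_dist Om z w - kob_dist Om o w)%R)
        < (2^-1 * ln Rr)%:E)%E].

End Kobayashi.

(* Along a geodesic ray the Busemann-type quantity k(gam s, w) - k(o, w), with
   w = gam t far out on the ray, is at most k(gam 0, o) - s by the triangle
   inequality through o.  Letting w run along the subsequence gam (t n) -> x
   shows that gam s lies in every big horoball H^b_o(x, R) as soon as s is
   large, so every accumulation point of the ray, x itself included, lies in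
   the closure of H^b_o(x, R). *)
From mathcomp Require Import all_boot all_order all_algebra.
From mathcomp Require Import all_classical all_reals all_analysis.
From mathcomp Require Import zify lra.
Set Implicit Arguments. Unset Strict Implicit.
Import Order.TTheory GRing.Theory Num.Theory.
Local Open Scope ring_scope.
Local Open Scope classical_set_scope.

Section KobayashiDistance.
Variables (R : realType) (d : nat) (Om : set (Cd R d)).

Lemma cddist_sym (z w : Cd R d) : cddist z w = cddist w z.
Proof.
rewrite /cddist /cdnorm; congr (Num.sqrt _); apply: eq_bigr => i _.
by rewrite /cabs /csub /= -[(w i).1 - _]opprB -[(w i).2 - _]opprB !sqrrN.
Qed.

Lemma kob_chain_sums_cat a b c s1 s2 :
  kob_chain_sums Om a b s1 -> kob_chain_sums Om b c s2 ->
  kob_chain_sums Om a c (s1 + s2).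
Proof.
move=> [n1 [p1 [f1 [a1 [b1 [P10 P1n H1 ->]]]]]].
move=> [n2 [p2 [f2 [a2 [b2 [P20 P2n H2 ->]]]]]].
pose glue T (u1 u2 : nat -> T) j := if (j < n1)%N then u1 j else u2 (j - n1)%N.
exists (n1 + n2)%N, (glue _ p1 p2), (glue _ f1 f2), (glue _ a1 a2), (glue _ b1 b2).
rewrite /glue; split.
- case: ifP => // /negbT; rewrite -leqNgt leqn0 => /eqP n10.
  by rewrite sub0n P20 -P1n n10 P10.
- by rewrite ifF ?addKn //; apply/negbTE; rewrite -leqNgt leq_addr.
- move=> j lt_j; case: ifP => lt_j1.
  + have [? ? ? ? F] := H1 j lt_j1; split => //.
    case: ifP => // /negbT; rewrite -leqNgt => le_n1j.
    have jn1 : j.+1 = n1 by apply/eqP; rewrite eqn_leq le_n1j andbT.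
    by rewrite jn1 subnn P20 F jn1 P1n.
  + have le_n1j : (n1 <= j)%N by rewrite leqNgt lt_j1.
    have [? ? ? ? F] := H2 (j - n1)%N ltac:(lia); split => //.
    by rewrite ifF ?F ?subSn //; apply/negbTE; rewrite -leqNgt; lia.
- rewrite big_split_ord /=; congr (_ + _); apply: eq_bigr => i _ /=.
  + by rewrite ltn_ord.
  + by rewrite ltnNge leq_addr /= addKn.
Qed.

(* [inf] returns 0 on sets without an infimum, so a nonzero distance is
   attained as a genuine infimum. *)
Lemma kob_dist_neq0_has_inf z w :
  kob_dist Om z w != 0 -> has_inf (kob_chain_sums Om z w).
Proof. by move=> /eqP kzw; apply: contrapT => /inf_out. Qed.

Hypothesis hyp : kobayashi_hyperbolic Om.

Lemma kob_chain_sums_neq0 z w : Om z -> Om w -> kob_chain_sums Om z w !=set0.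
Proof.
move=> Oz Ow; have [<-|zw] := pselect (z = w).
  exists 0, 0%N, (fun _ => z), (fun _ _ => z), (fun _ => (0, 0)), (fun _ => (0, 0)).
  by split => //; rewrite big_ord0.
by case: (kob_dist_neq0_has_inf (lt0r_neq0 (hyp Oz Ow zw))).
Qed.

Lemma kob_dist_triangle a b c : Om a -> Om b -> Om c -> kob_dist Om a c != 0 ->
  kob_dist Om a c <= kob_dist Om a b + kob_dist Om b c.
Proof.
move=> Oa Ob Oc /kob_dist_neq0_has_inf[_ lb_ac].
rewrite -lerBlDl; apply: lb_le_inf => [|s2 Hs2]; first exact: kob_chain_sums_neq0.
suff : kob_dist Om a c - s2 <= kob_dist Om a b by lra.
apply: lb_le_inf => [|s1 Hs1]; first exact: kob_chain_sums_neq0.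
suff : kob_dist Om a c <= s1 + s2 by lra.
by apply: (ge_inf lb_ac); exact: kob_chain_sums_cat Hs1 Hs2.
Qed.

End KobayashiDistance.

Lemma liminf_at_le (R : realType) d (Om : set (Cd R d)) (x : Cd R d)
    (F : Cd R d -> R) (c : R) :
  (forall dl : R, 0 < dl ->
     exists2 w, [/\ Om w, w <> x & cddist w x < dl] & F w <= c) ->
  (liminf_at Om x F <= c%:E)%E.
Proof.
move=> near_x; apply: ge_ereal_sup => _ [dl dl0 <-].
have [w [Ow wx dwx] Fw] := near_x dl dl0.
by apply: (@le_trans _ _ (F w)%:E); [apply: ereal_inf_lbound; exists w|].
Qed.

Section GeodesicRay.
Variables (R : realType) (d : nat) (Om : set (Cd R d)) (gam : R -> Cd R d).
Hypotheses (hyp : kobayashi_hyperbolic Om) (ray : geodesic_ray Om gam).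

Lemma geodesic_ray_busemann_le o s t : Om o -> 0 <= s -> s <= t -> 0 < t ->
  kob_dist Om (gam s) (gam t) - kob_dist Om o (gam t) <=
  kob_dist Om (gam 0) o - s.
Proof.
case: ray => gOm gd Oo s0 st t0.
have k0t : kob_dist Om (gam 0) (gam t) = t.
  by rewrite gd ?lexx ?(ltW t0) // sub0r normrN gtr0_norm.
have := kob_dist_triangle hyp (gOm 0 (lexx 0)) Oo (gOm t (ltW t0)).
rewrite k0t => /(_ (lt0r_neq0 t0)).
have kst : kob_dist Om (gam s) (gam t) = t - s.
  by rewrite gd ?(ltW t0) // distrC ger0_norm ?subr_ge0.
rewrite kst; lra.
Qed.

Lemma geodesic_ray_in_big_horoball (t : nat -> R) (x o : Cd R d) (Rr s : R) :
  ~ Om x -> tends_to_pinfty t -> seq_cvg_to (fun n => gam (t n)) x ->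
  Om o -> 0 <= s -> kob_dist Om (gam 0) o - s < 2^-1 * ln Rr ->
  big_horoball Om o x Rr (gam s).
Proof.
case: ray => gOm _ nx tt ct Oo s0 sL; split; first exact: gOm.
apply: le_lt_trans (liminf_at_le _) _; last by rewrite lte_fin; exact: sL.
move=> dl dl0; have [N1 HN1] := tt (Num.max s 0); have [N2 HN2] := ct dl dl0.
have := HN1 (maxn N1 N2) (leq_maxl _ _); rewrite gt_max => /andP[st t0].
exists (gam (t (maxn N1 N2))); last exact: geodesic_ray_busemann_le (ltW st) t0.
split; [exact/gOm/ltW | by move=> gx; apply: nx; rewrite -gx; exact/gOm/ltW |].
exact/HN2/leq_maxr.
Qed.

Lemma geodesic_ray_limit_in_big_horoball_closure (t s : nat -> R) (x y o : Cd R d)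
    (Rr : R) :
  ~ Om x -> tends_to_pinfty t -> seq_cvg_to (fun n => gam (t n)) x ->
  tends_to_pinfty s -> seq_cvg_to (fun n => gam (s n)) y ->
  Om o -> cd_closure (big_horoball Om o x Rr) y.
Proof.
move=> nx tt ct ts cs Oo e e0.
have [N1 HN1] := ts (Num.max 0 (kob_dist Om (gam 0) o - 2^-1 * ln Rr)).
have [N2 HN2] := cs e e0.
have := HN1 (maxn N1 N2) (leq_maxl _ _); rewrite gt_max => /andP[s0 sL].
exists (gam (s (maxn N1 N2))); split.
- by apply: geodesic_ray_in_big_horoball nx tt ct Oo (ltW s0) _; lra.
- by rewrite cddist_sym; exact/HN2/leq_maxr.
Qed.

End GeodesicRay.

Theorem lemma3p3 (R : realType) (d : nat) (Om : set (Cd R d))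
    (gam : R -> Cd R d) (x y : Cd R d) (t s : nat -> R) :
  complete_kob_hyperbolic Om ->
  geodesic_ray Om gam ->
  cd_boundary Om x -> cd_boundary Om y ->
  tends_to_pinfty t -> tends_to_pinfty s ->
  seq_cvg_to (fun n => gam (t n)) x ->
  seq_cvg_to (fun n => gam (s n)) y ->
  (forall (Rr : R) (o : Cd R d), 0 < Rr -> Om o ->
      cd_closure (big_horoball Om o x Rr) y) /\
  (forall (Rr : R) (o : Cd R d), 0 < Rr -> Om o ->
      cd_closure (big_horoball Om o x Rr) x).
Proof.
move=> [_ [hyp _]] ray [_ nx] _ tt ts ct cs.
split=> Rr o _ Oo.
- exact (geodesic_ray_limit_in_big_horoball_closure hyp ray Rr nx tt ct ts cs Oo).
- exact (geodesic_ray_limit_in_big_horoball_closure hyp ray Rr nx tt ct tt ct Oo).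
Qed.
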